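(* Let $\Gamma$ be a gain operator on $\ell^\infty_+(\mathcal I)$ and let $A:=\bigcup_{r\ge0}\mathrm{Fix}(\Gamma^\oplus_{r\mathbf 1})$, where $\Gamma^\oplus_b(s):=b\oplus\Gamma(s)$. The following are equivalent: (a) $\Gamma$ satisfies the $\oplus$-MBI property; (b) $\Sigma(\hat\Gamma)$ is UGS, $\Sigma(\Gamma)$ is GATT$^*$, and $A$ is coercive; (c) $\Sigma(\hat\Gamma)$ is UGS, $\Gamma$ satisfies the NJI condition, and $A$ is coercive; (d) $\Psi(\Gamma)$ is cofinal, $\Gamma$ satisfies the NJI condition, and $A$ is coercive. Here $\hat\Gamma(s):=s\oplus\Gamma(s)$.
   Context: Let $\mathcal I$ be a nonempty countable index set; $\ell^\infty_+(\mathcal I)$ is the cone of nonnegative real families $s=(s_i)_{i\in\mathcal I}$ with $\|s\|:=\sup_i|s_i|<\infty$, ordered componentwise ($s>0$ means $s\ge0$, $s\ne0$); $\mathbf 1$ is the all-ones vector; $\oplus$ is the componentwise maximum. $\mathcal K_\infty$: continuous strictly increasing unbounded $\gamma:\mathbb R_+\to\mathbb R_+$ with $\gamma(0)=0$. For $\mathcal J\subset\mathcal I$, $s_{|\mathcal J}$ agrees with $s$ on $\mathcal J$ and is $0$ elsewhere. A sequence in $\ell^\infty(\mathcal I)$ converges weak$^*$ (viewing $\ell^\infty=(\ell^1)^*$) iff it is norm-bounded and converges componentwise. Gain operator: for each $i$ a finite (possibly empty) $\mathcal I_i\subset\mathcal I\setminus\{i\}$; directed graph $\mathcal G$ with vertices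 $\mathcal I$ and edges $ji$, $j\in\mathcal I_i$; a pointwise equicontinuous family $\gamma_{ij}\in\mathcal K_\infty$ ($ji\in E(\mathcal G)$); functions $\mu_i:\ell^\infty_+(\mathcal I)\to[0,\infty]$ with (M1) some $\xi\in\mathcal K_\infty$ has $\mu_i(0)=0$, $\mu_i(s)\ge\xi(\|s\|)$; (M2) $\mu_i$ monotone; (M3) for each finite $\mathcal J$, $\mu_i$ restricted to vectors vanishing off $\mathcal J$ is finite-valued and continuous; (M4) for each norm-bounded $A$ and $\varepsilon>0$ there is $\delta>0$ with $\sup_i|\mu_i(s_{|\mathcal I_i})-\mu_i(s^0_{|\mathcal I_i})|\le\varepsilon$ whenever $s^0\in A$, $\|s-s^0\|\le\delta$. $\Gamma_i(s):=\mu_i([\gamma_{ij}(s_j)]_{j\in\mathcal I_i})$ (argument zero outside $\mathcal I_i$). For monotone $T$ with $T(0)=0$: $\mathrm{Fix}(T)$ is the fixed point set, $\Psi(T):=\{s:T(s)\le s\}$; $\Sigma(T)$ is the system $s^{n+1}=T(s^n)$; UGS: $\|T^n(s)\|\le\varphi(\|s\|)$ for some $\varphi\in\mathcal K_\infty$ and all $s,n$; GATT$^*$: $T^n(s)\to0$ weak$^*$ for every $s$. NJI condition: $\Gamma(s)\ge s$ fails for every $s>0$. $\oplus$-MBI property: there is $\varphi\in\mathcal K_\infty$ such that for all $s,b\in\ell^\infty_+(\mathcal I)$, $s\le b\oplus\Gamma(s)$ implies $\|s\|\le\varphi(\|b\|)$. A set $A$ is cofinal if every $s$ has $\hat s\in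 A$ with $s\le\hat s$; it is coercive if there is $\underline\varphi\in\mathcal K_\infty$ with $s\ge\underline\varphi(\|s\|)\mathbf 1$ for all $s\in A$. *)

From HB Require Import structures.
From mathcomp Require Import all_boot all_order all_algebra.
From mathcomp Require Import all_classical all_reals all_analysis.
Set Implicit Arguments. Unset Strict Implicit. Unset Printing Implicit Defensive.
Import Order.TTheory GRing.Theory Num.Theory.
Import numFieldNormedType.Exports.
Local Open Scope classical_set_scope.
Local Open Scope ring_scope.

Section Defs.
Variables (R : realType) (I : countType).

Definition linf_pos (s : I -> R) : Prop :=
  (forall i, 0 <= s i) /\ exists M : R, forall i, s i <= M.

Definition nrm (s : I -> R) : R := sup (range (fun i => `|s i|)).

Definition vle (s t : I -> R) : Prop := forall i, s i <= t i.

Definition vmax (s t : I -> R) : I -> R := fun i => Num.max (s i) (t i).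

Definition vzero : I -> R := fun _ => 0.
Definition vconst (r : R) : I -> R := fun _ => r.

Definition restr (J : set I) (s : I -> R) : I -> R :=
  fun j => if j \in J then s j else 0.

Definition Kinf (g : R -> R) : Prop :=
  g 0 = 0 /\
  {within [set x : R | 0 <= x], continuous g} /\
  (forall x y, 0 <= x -> x < y -> g x < g y) /\
  (forall M : R, exists x, 0 <= x /\ M < g x).

(* gain operator data: (Ii, gam, mu) with gam i j = gamma_ij for j in I_i *)
Definition gain_operator (Ii : I -> set I) (gam : I -> I -> R -> R)
  (mu : I -> (I -> R) -> \bar R) : Prop :=
  (forall i, finite_set (Ii i) /\ ~ Ii i i) /\
  (forall i j, Ii i j -> Kinf (gam i j)) /\
  (forall r e : R, 0 <= r -> 0 < e -> exists2 d : R, 0 < d &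
     forall i j r', Ii i j -> 0 <= r' -> `|r' - r| <= d ->
       `|gam i j r' - gam i j r| <= e) /\
  (forall i s, linf_pos s -> (0 <= mu i s)%E) /\
  (exists2 xi, Kinf xi &
     forall i, mu i vzero = 0%E /\
       forall s, linf_pos s -> ((xi (nrm s))%:E <= mu i s)%E) /\
  (forall i s t, linf_pos s -> linf_pos t -> vle s t -> (mu i s <= mu i t)%E) /\
  (forall i (J : set I), finite_set J ->
     forall s, linf_pos s -> (forall j, ~ J j -> s j = 0) ->
       (mu i s < +oo)%E /\
       (forall e : R, 0 < e -> exists2 d : R, 0 < d &
          forall t, linf_pos t -> (forall j, ~ J j -> t j = 0) ->
            nrm (fun j => t j - s j) <= d ->
            (`|mu i t - mu i s| <= e%:E)%E)) /\
  (forall (A : set (I -> R)) (e : R),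
     A `<=` linf_pos -> (exists C : R, forall s, A s -> nrm s <= C) -> 0 < e ->
     exists2 d : R, 0 < d &
       forall s0 s, A s0 -> linf_pos s -> nrm (fun j => s j - s0 j) <= d ->
         forall i, (`|mu i (restr (Ii i) s) - mu i (restr (Ii i) s0)| <= e%:E)%E).

Definition Gam (Ii : I -> set I) (gam : I -> I -> R -> R)
  (mu : I -> (I -> R) -> \bar R) (s : I -> R) : I -> R :=
  fun i => fine (mu i (fun j => if j \in Ii i then gam i j (s j) else 0)).

Definition hatop (T : (I -> R) -> I -> R) (s : I -> R) : I -> R := vmax s (T s).

Definition plusop (T : (I -> R) -> I -> R) (b : I -> R) (s : I -> R) : I -> R :=
  vmax b (T s).

Definition Fix (T : (I -> R) -> I -> R) : set (I -> R) :=
  [set s | linf_pos s /\ T s = s].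

Definition Psi (T : (I -> R) -> I -> R) : set (I -> R) :=
  [set s | linf_pos s /\ vle (T s) s].

Definition Aset (T : (I -> R) -> I -> R) : set (I -> R) :=
  [set s | exists2 r : R, 0 <= r & Fix (plusop T (vconst r)) s].

Definition UGS (T : (I -> R) -> I -> R) : Prop :=
  exists2 phi, Kinf phi &
    forall s, linf_pos s -> forall n : nat, nrm (iter n T s) <= phi (nrm s).

(* weak-* convergence of a sequence in l^oo to 0: norm-bounded and componentwise *)
Definition weakstar_to0 (u : nat -> I -> R) : Prop :=
  (exists M : R, forall n, nrm (u n) <= M) /\
  (forall i, (fun n => u n i) @ \oo --> (0 : R)).

Definition GATTs (T : (I -> R) -> I -> R) : Prop :=
  forall s, linf_pos s -> weakstar_to0 (fun n => iter n T s).

Definition NJI (T : (I -> R) -> I -> R) : Prop :=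
  forall s, linf_pos s -> s <> vzero -> ~ vle s (T s).

Definition MBI (T : (I -> R) -> I -> R) : Prop :=
  exists2 phi, Kinf phi &
    forall s b, linf_pos s -> linf_pos b -> vle s (vmax b (T s)) ->
      nrm s <= phi (nrm b).

Definition cofinal (A : set (I -> R)) : Prop :=
  forall s, linf_pos s -> exists2 t, A t & vle s t.

Definition coercive (A : set (I -> R)) : Prop :=
  exists2 phi, Kinf phi & forall s, A s -> vle (vconst (phi (nrm s))) s.

End Defs.

(* Only three properties of the gain operator Γ are used: it maps ℓ∞₊ into itself, it is
   monotone, and it is sequentially continuous for componentwise convergence (each Γ_i reads
   finitely many coordinates, where (M3) and the equicontinuity of the γ_ij apply).
   For such an operator a bounded monotone orbit converges componentwise, and its limit is a
   fixed point.  Under UGS the increasing Γ̂-orbit of s therefore converges to a fixed point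
   of Γ̂ above s, i.e. to a point of Ψ(Γ); under NJI the decreasing Γ-orbit of a point of
   Ψ(Γ) converges to a fixed point of Γ, hence to 0, and squeezes Γⁿ(s) to 0: this is GATT*.
   If s ≤ b ⊕ Γ(s) and r = ‖b‖, iterating Γ^⊕_{r1} from s below a point of Ψ(Γ) yields
   w ∈ A with s ≤ w; on A, coercivity (with gain ψ) and NJI force ψ(‖w‖) ≤ r, which is the
   MBI bound ‖s‖ ≤ ψ⁻¹(r).  Conversely, MBI with b = 0 gives NJI, along the Γ̂-orbit it gives
   UGS, and with b = r1 on A it gives coercivity through the inverse of the MBI gain. *)

From mathcomp Require Import all_boot all_order all_algebra.
From mathcomp Require Import all_classical all_reals all_analysis.
From mathcomp Require Import lra.
Import Order.TTheory GRing.Theory Num.Theory.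
Import numFieldNormedType.Exports.
Set Implicit Arguments. Unset Strict Implicit. Unset Printing Implicit Defensive.
Local Open Scope classical_set_scope.
Local Open Scope ring_scope.

Section Kinf.
Variable R : realType.
Implicit Types (g h : R -> R) (x y : R).

Lemma Kinf_ler g x y : Kinf g -> 0 <= x -> 0 <= y -> (g x <= g y) = (x <= y).
Proof.
move=> [_ [_ [g_lt _]]] x0 y0; have [xy|yx] := leP x y.
  move: xy; rewrite le_eqVlt => /predU1P[->|/(g_lt _ _ x0)/ltW//].
  exact: lexx.
by apply/negbTE; rewrite -ltNge g_lt.
Qed.

Lemma Kinf_ge0 g x : Kinf g -> 0 <= x -> 0 <= g x.
Proof. by move=> gK x0; have [g0 _] := gK; rewrite -{1}g0 Kinf_ler. Qed.

Lemma Kinf_within_continuous g : Kinf g -> {within `[0, +oo[, continuous g}.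
Proof. by move=> [_ [gc _]]; rewrite set_itvcy. Qed.

Lemma Kinf_surj g y : Kinf g -> 0 <= y -> exists2 x, 0 <= x & g x = y.
Proof.
move=> gK y0; have [g0 [_ [_ g_unbounded]]] := gK; have [b [b0 yb]] := g_unbounded y.
have gb0 : 0 <= g b by exact: Kinf_ge0.
have gc : {within `[0, b], continuous g}.
  apply: continuous_subspaceW (Kinf_within_continuous gK).
  by apply: subset_itvl; rewrite bnd_simp.
have [|x x0b gxy] := @IVT R g 0 b y b0 gc.
  by rewrite g0 (min_l gb0) (max_r gb0) y0 ltW.
by exists x => //; move: x0b; rewrite in_itv /= => /andP[].
Qed.

Lemma Kinf_can_continuous g h : Kinf g ->
  (forall x, 0 <= x -> h (g x) = x) -> {within `[0, +oo[, continuous h}.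
Proof.
move=> gK gh; have [g0 [_ [g_lt g_unbounded]]] := gK.
have hC b : 0 <= b -> 0 < g b ->
    {in `]0, g b[, continuous h} /\ h @ 0^'+ --> h 0.
  move=> b0 gb0.
  suff /(continuous_within_itvP _ gb0)[] : {within `[0, g b], continuous h} by [].
  have gC : {within `[0, b], continuous g}.
    apply: continuous_subspaceW (Kinf_within_continuous gK).
    by apply: subset_itvl; rewrite bnd_simp.
  have ghK : {in `[0, b], cancel g h}.
    by move=> x; rewrite in_itv /= => /andP[x0 _]; apply: gh.
  by have := segment_can_le_continuous b0 gC ghK; rewrite g0.
apply/continuous_within_itvcyP; split; last first.
  have g1 : 0 < g 1 by rewrite -g0; apply: g_lt.
  by have [] := hC 1 ler01 g1.
move=> y; rewrite in_itv /= andbT => y0.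
have [b [b0 ygb]] := g_unbounded y.
by have [+ _] := hC b b0 (lt_trans y0 ygb); apply; rewrite in_itv /= y0.
Qed.

Lemma Kinf_inverse g : Kinf g ->
  exists2 h, Kinf h & forall x, 0 <= x -> h (g x) = x.
Proof.
move=> gK; have [g0 _] := gK.
have /choice[h gh] : forall y, exists x, 0 <= y -> 0 <= x /\ g x = y.
  move=> y; have [y0|_] := boolP (0 <= y); last by exists 0.
  by have [x x0 gxy] := Kinf_surj gK y0; exists x.
have hg x : 0 <= x -> h (g x) = x.
  move=> x0; have [hx0 ghx] := gh _ (Kinf_ge0 gK x0).
  by apply/le_anti; rewrite -(Kinf_ler gK hx0 x0) -(Kinf_ler gK x0 hx0) ghx lexx.
exists h => //; split; first by rewrite -g0 hg.
split; first by have := Kinf_can_continuous gK hg; rewrite set_itvcy.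
split.
  move=> x y x0 xy; have y0 := le_lt_trans x0 xy.
  have [hx0 ghx] := gh _ x0; have [hy0 ghy] := gh _ (ltW y0).
  by rewrite ltNge -(Kinf_ler gK) // ghx ghy -ltNge.
move=> M; have M0 : 0 <= Num.max M 0 by rewrite le_max lexx orbT.
have MM : M <= Num.max M 0 by rewrite le_max lexx.
have M1 : 0 <= Num.max M 0 + 1 by rewrite addr_ge0.
exists (g (Num.max M 0 + 1)); rewrite hg // Kinf_ge0 //; split => //.
lra.
Qed.

End Kinf.

Section Linf.
Variables (R : realType) (I : countType) (i0 : I).
Implicit Types (s t b : I -> R) (r : R).

Lemma linf_le s i : linf_pos s -> s i <= nrm s.
Proof.
move=> [s0 [M sM]]; rewrite -[s i]ger0_norm //; apply: ub_le_sup; last by exists i.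
by exists M => _ [j _ <-]; rewrite ger0_norm.
Qed.

Lemma nrm_le s c : (forall i, `|s i| <= c) -> nrm s <= c.
Proof. by move=> sc; apply: ge_sup; [exists `|s i0|, i0 | move=> _ [j _ <-]]. Qed.

Lemma nrm_ge0 s : linf_pos s -> 0 <= nrm s.
Proof. by move=> sL; apply: le_trans (linf_le i0 sL); case: sL. Qed.

Lemma linf_pos_nrm_le s c : linf_pos s -> (forall i, s i <= c) -> nrm s <= c.
Proof. by move=> [s0 _] sc; apply: nrm_le => i; rewrite ger0_norm. Qed.

Lemma le_nrm s t : linf_pos s -> linf_pos t -> vle s t -> nrm s <= nrm t.
Proof.
by move=> sL tL st; apply: linf_pos_nrm_le => // i; apply: le_trans (st i) (linf_le i tL).
Qed.

Lemma linf_const r : 0 <= r -> linf_pos (@vconst R I r).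
Proof. by move=> r0; split => //; exists r. Qed.

Lemma nrm_const r : 0 <= r -> nrm (@vconst R I r) = r.
Proof.
move=> r0; apply/le_anti; rewrite (linf_le i0 (linf_const r0)) andbT.
by apply: linf_pos_nrm_le => //; exact: linf_const.
Qed.

Lemma nrm_le0 s : linf_pos s -> nrm s <= 0 -> s = @vzero R I.
Proof.
move=> sL s_le0; apply/funext => i; apply/le_anti.
by rewrite /vzero (le_trans (linf_le i sL) s_le0) /=; case: sL.
Qed.

Lemma linf_vmax s t : linf_pos s -> linf_pos t -> linf_pos (vmax s t).
Proof.
move=> [s0 [M sM]] [t0 [N tN]]; split => [i|]; first by rewrite le_max s0.
by exists (Num.max M N) => i; rewrite ge_max !le_max sM tN orbT.
Qed.

Lemma linf_restr (J : set I) s : linf_pos s -> linf_pos (restr J s).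
Proof.
move=> [s0 [M sM]]; split => [j|]; first by rewrite /restr; case: ifP.
by exists (Num.max M 0) => j; rewrite /restr le_max; case: ifP; rewrite ?sM ?lexx ?orbT.
Qed.

Lemma vle_refl s : vle s s.
Proof. by move=> i; exact: lexx. Qed.

Lemma vle_trans s t b : vle s t -> vle t b -> vle s b.
Proof. by move=> st tb i; apply: le_trans (st i) (tb i). Qed.

Lemma vle_const_nrm s : linf_pos s -> vle s (vconst (nrm s)).
Proof. by move=> sL i; apply: linf_le. Qed.

Lemma vmax_le s t b : vle s b -> vle t b -> vle (vmax s t) b.
Proof. by move=> sb tb i; rewrite ge_max sb tb. Qed.

Lemma le_vmaxl s t : vle s (vmax s t).
Proof. by move=> i; rewrite le_max lexx. Qed.

Lemma le_vmaxr s t : vle t (vmax s t).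
Proof. by move=> i; rewrite le_max lexx orbT. Qed.

Lemma vmax_mono s t s' t' : vle s s' -> vle t t' -> vle (vmax s t) (vmax s' t').
Proof.
move=> ss' tt'; apply: vmax_le.
  exact: vle_trans ss' (le_vmaxl _ _).
exact: vle_trans tt' (le_vmaxr _ _).
Qed.

End Linf.

Arguments linf_const {R I r}.

Section MonotoneOperators.
Variables (R : realType) (I : countType).
Implicit Types (F H : (I -> R) -> I -> R) (s t b x : I -> R).

Definition monotone_continuous F : Prop :=
  [/\ forall s, linf_pos s -> linf_pos (F s),
      forall s t, linf_pos s -> linf_pos t -> vle s t -> vle (F s) (F t) &
      forall (u : nat -> I -> R) t, (forall n, linf_pos (u n)) -> linf_pos t ->
        (forall j, (fun n => u n j) @ \oo --> t j) ->
        forall i, (fun n => F (u n) i) @ \oo --> F t i].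

Lemma monotone_continuous_id : monotone_continuous id.
Proof. by split. Qed.

Lemma monotone_continuous_cst b : linf_pos b -> monotone_continuous (fun _ => b).
Proof.
by move=> bL; split => // [s t _ _ _ i | u t _ _ _ i]; [exact: lexx | exact: cvg_cst].
Qed.

Lemma monotone_continuous_vmax F H : monotone_continuous F -> monotone_continuous H ->
  monotone_continuous (fun s => vmax (F s) (H s)).
Proof.
move=> [FL Fmono Fcont] [HL Hmono Hcont]; split.
- by move=> s sL; apply: linf_vmax; [exact: FL | exact: HL].
- by move=> s t sL tL st; apply: vmax_mono; [exact: Fmono | exact: Hmono].
- move=> u t uL tL ut i; apply: continuous2_cvg; last 2 first.
  + exact: Fcont.
  + exact: Hcont.
  exact: (@max_continuous _ R (F t i, H t i)).
Qed.

Lemma monotone_continuous_hatop F : monotone_continuous F ->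
  monotone_continuous (hatop F).
Proof. exact: (@monotone_continuous_vmax id F monotone_continuous_id). Qed.

Lemma monotone_continuous_plusop F b : linf_pos b -> monotone_continuous F ->
  monotone_continuous (plusop F b).
Proof.
move=> bL; apply: (@monotone_continuous_vmax (fun _ => b) F).
exact: monotone_continuous_cst.
Qed.

Lemma linf_pos_cvg (u : nat -> I -> R) w M : (forall n, linf_pos (u n)) ->
  (forall n j, u n j <= M) -> (forall j, (fun n => u n j) @ \oo --> w j) ->
  linf_pos w.
Proof.
move=> uL uM uw; split => [j|]; last by exists M => j; apply: cvgr_to_le (uw j) _; near=> n.
by apply: cvgr_to_ge (uw j) _; near=> n; case: (uL n).
Unshelve. all: by end_near.
Qed.

Lemma nondecreasing_linf_cvg (u : nat -> I -> R) M : (forall n, linf_pos (u n)) ->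
  (forall n, vle (u n) (u n.+1)) -> (forall n j, u n j <= M) ->
  exists2 w, linf_pos w &
    (forall n, vle (u n) w) /\ forall j, (fun n => u n j) @ \oo --> w j.
Proof.
move=> uL u_nd uM.
have u_nd_j j : nondecreasing_seq (fun n => u n j).
  by apply/nondecreasing_seqP => n; exact: u_nd.
have cvg_u j : cvgn (fun n => u n j).
  by apply: nondecreasing_is_cvgn => //; exists M => _ [n _ <-].
exists (fun j => limn (fun n => u n j)); first exact: linf_pos_cvg uL uM cvg_u.
by split => [n j|]; [exact: nondecreasing_cvgn_le (cvg_u j) _ | exact: cvg_u].
Qed.

Lemma nonincreasing_linf_cvg (u : nat -> I -> R) : (forall n, linf_pos (u n)) ->
  (forall n, vle (u n.+1) (u n)) ->
  exists2 w, linf_pos w & forall j, (fun n => u n j) @ \oo --> w j.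
Proof.
move=> uL u_ni.
have u_ni_j j : nonincreasing_seq (fun n => u n j).
  by apply/nonincreasing_seqP => n; exact: u_ni.
have cvg_u j : cvgn (fun n => u n j).
  by apply: nonincreasing_is_cvgn => //; exists 0 => _ [n _ <-]; case: (uL n).
exists (fun j => limn (fun n => u n j)); last exact: cvg_u.
apply: (linf_pos_cvg (M := nrm (u 0%N)) uL _ cvg_u) => n j.
exact: le_trans (u_ni_j j 0%N n (leq0n n)) (linf_le j (uL 0%N)).
Qed.

Section Iterates.
Variable F : (I -> R) -> I -> R.
Hypothesis FC : monotone_continuous F.

Lemma iter_linf x n : linf_pos x -> linf_pos (iter n F x).
Proof. by case: FC => FL _ _ xL; elim: n => //= n; exact: FL. Qed.

Lemma iter_vle x y n : linf_pos x -> linf_pos y -> vle x y ->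
  vle (iter n F x) (iter n F y).
Proof.
case: FC => _ Fmono _ xL yL xy; elim: n => //= n.
by apply: Fmono; exact: iter_linf.
Qed.

Lemma cvg_iter_fix x w : linf_pos x -> linf_pos w ->
  (forall j, (fun n => iter n F x j) @ \oo --> w j) -> F w = w.
Proof.
case: FC => _ _ Fcont xL wL xw; apply/funext => i.
have /(Fcont _ _ (fun n => iter_linf n xL) wL) Fxw := xw.
apply: (cvg_unique (@Rhausdorff R) (Fxw i)).
by have := xw i; rewrite -cvg_shiftS.
Qed.

Lemma iter_fix_above x M : linf_pos x -> vle x (F x) ->
  (forall n j, iter n F x j <= M) -> exists2 w, Fix F w & vle x w.
Proof.
case: FC => _ Fmono _ xL xFx xM.
have iter_nd n : vle (iter n F x) (iter n.+1 F x).
  elim: n => //= n; apply: Fmono; [exact: iter_linf | exact: (iter_linf n.+1)].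
have [w wL [xw cvg_xw]] := nondecreasing_linf_cvg (fun n => iter_linf n xL) iter_nd xM.
by exists w; [split => //; exact: cvg_iter_fix cvg_xw | exact: xw 0%N].
Qed.

Lemma iter_fix_below t : linf_pos t -> vle (F t) t ->
  exists2 w, Fix F w & forall j, (fun n => iter n F t j) @ \oo --> w j.
Proof.
case: FC => _ Fmono _ tL Ftt.
have iter_ni n : vle (iter n.+1 F t) (iter n F t).
  elim: n => [|n]; first exact: Ftt.
  by apply: Fmono; [exact: (iter_linf n.+1) | exact: iter_linf].
have [w wL cvg_tw] := nonincreasing_linf_cvg (fun n => iter_linf n tL) iter_ni.
by exists w => //; split => //; exact: cvg_iter_fix cvg_tw.
Qed.

End Iterates.

End MonotoneOperators.

Section Equivalences.
Variables (R : realType) (I : countType) (i0 : I).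
Variable T : (I -> R) -> I -> R.
Hypothesis TC : monotone_continuous T.
Implicit Types (s t b w : I -> R) (r : R).

Let T_mono s t : linf_pos s -> linf_pos t -> vle s t -> vle (T s) (T t).
Proof. by case: TC => _ + _; apply. Qed.

Lemma MBI_UGS : MBI T -> UGS (hatop T).
Proof.
have hatC := monotone_continuous_hatop TC.
move=> [phi phiK MBIphi]; exists phi => // s sL n.
have xL k : linf_pos (iter k (hatop T) s) by exact: iter_linf.
apply: MBIphi => //; elim: n => [|n IHn] /=; first exact: le_vmaxl.
set x := iter n _ s.
have Tx_le : vle (T x) (T (hatop T x)).
  by apply: T_mono; [exact: xL | exact: (xL n.+1) | exact: le_vmaxl].
apply: vmax_le; first exact: vle_trans IHn (vmax_mono (vle_refl s) Tx_le).
exact: vle_trans Tx_le (le_vmaxr _ _).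
Qed.

Lemma UGS_cofinal : UGS (hatop T) -> cofinal (Psi T).
Proof.
move=> [phi _ UGSphi] s sL.
have hatC := monotone_continuous_hatop TC.
have [|w [wL hatw] sw] := iter_fix_above hatC (M := phi (nrm s)) sL (le_vmaxl _ _).
  by move=> n j; apply: le_trans (UGSphi s sL n); apply: linf_le; exact: iter_linf.
by exists w => //; split => //; rewrite -{2}hatw; exact: le_vmaxr.
Qed.

Lemma NJI_eq0 s : NJI T -> linf_pos s -> vle s (T s) -> s = @vzero R I.
Proof. by move=> NJ sL sTs; apply: contrapT => s0; exact: NJ s sL s0 sTs. Qed.

Lemma MBI_NJI : MBI T -> NJI T.
Proof.
move=> [phi [phi0 _] MBIphi] s sL s0 sTs; apply: s0; apply: nrm_le0 => //.
have := MBIphi s (vconst 0) sL (linf_const (lexx 0)) (vle_trans sTs (le_vmaxr _ _)).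
by rewrite (nrm_const i0 (lexx 0)) phi0.
Qed.

Lemma Psi_iter_cvg0 t : NJI T -> Psi T t ->
  forall j, (fun n => iter n T t j) @ \oo --> 0.
Proof.
move=> NJ [tL Ttt] j; have [w [wL Tw] cvg_tw] := iter_fix_below TC tL Ttt.
have w0 : w = @vzero R I by apply: NJI_eq0; rewrite // Tw.
by have := cvg_tw j; rewrite w0.
Qed.

Lemma cofinal_NJI_GATT : cofinal (Psi T) -> NJI T -> GATTs T.
Proof.
move=> cof NJ s sL; have [t [tL Ttt] st] := cof s sL.
have iter_s_le n : vle (iter n T s) (iter n T t) by exact: iter_vle.
have iter_t_le n : vle (iter n T t) t.
  elim: n => [|n IHn] /=; first exact: vle_refl.
  by apply: vle_trans _ Ttt; apply: T_mono => //; exact: iter_linf.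
split.
  exists (nrm t) => n; apply: (le_nrm i0 (iter_linf TC n sL) tL).
  exact: vle_trans (iter_s_le n) (iter_t_le n).
move=> j; apply: squeeze_cvgr (Psi_iter_cvg0 NJ (conj tL Ttt) j); last exact: cvg_cst.
by near=> n; rewrite iter_s_le andbT; case: (iter_linf TC n sL).
Unshelve. all: by end_near.
Qed.

Lemma GATT_NJI : GATTs T -> NJI T.
Proof.
move=> GA s sL s0 sTs; apply: s0; apply/funext => j; apply/le_anti.
have iter_ge n : vle s (iter n T s).
  elim: n => [|n IHn] /=; first exact: vle_refl.
  by apply: vle_trans sTs _; apply: T_mono => //; exact: iter_linf.
have [_ cvg_s0] := GA s sL.
have sj_le0 : s j <= 0 by apply: (cvgr_to_ge (cvg_s0 j)); near=> n; exact: iter_ge.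
by rewrite /vzero sj_le0 /=; case: sL.
Unshelve. all: by end_near.
Qed.

Lemma MBI_coercive : MBI T -> coercive (Aset T).
Proof.
move=> [phi phiK MBIphi]; have [psi psiK psi_phi] := Kinf_inverse phiK.
exists psi => // s [r r0 [sL Fs]] i.
have s_le : vle s (plusop T (vconst r) s) by rewrite Fs; exact: vle_refl.
have := MBIphi s _ sL (linf_const r0) s_le; rewrite (nrm_const i0 r0) => s_phi.
have r_le_s : r <= s i by rewrite -Fs /plusop /vmax le_max lexx.
apply: le_trans r_le_s; rewrite -[leRHS](psi_phi r r0) Kinf_ler //.
  exact: (nrm_ge0 i0).
exact: Kinf_ge0.
Qed.

Lemma cofinal_plusop_fix s r : cofinal (Psi T) -> 0 <= r -> linf_pos s ->
  vle s (plusop T (vconst r) s) ->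
  exists2 w, Fix (plusop T (vconst r)) w & vle s w.
Proof.
move=> cof r0 sL s_le; have rL : linf_pos (@vconst R I r) := linf_const r0.
have [t [tL Ttt] st] := cof _ (linf_vmax sL rL).
have iter_le_t n : vle (iter n (plusop T (vconst r)) s) t.
  elim: n => [|n IHn] /=; first exact: vle_trans (le_vmaxl _ _) st.
  apply: vmax_le; first exact: vle_trans (le_vmaxr _ _) st.
  apply: vle_trans _ Ttt; apply: T_mono IHn => //.
  exact: iter_linf (monotone_continuous_plusop rL TC) _ _ sL.
apply: (iter_fix_above (monotone_continuous_plusop rL TC) (M := nrm t)) => //.
by move=> n j; apply: le_trans (iter_le_t n j) (linf_le j tL).
Qed.

Lemma coercive_plusop_fix_bound psi w r : NJI T -> Kinf psi ->
  (forall s, Aset T s -> vle (vconst (psi (nrm s))) s) -> 0 <= r ->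
  Fix (plusop T (vconst r)) w -> psi (nrm w) <= r.
Proof.
move=> NJ [psi0 _] coer r0 wFix; have [wL Fw] := wFix.
rewrite leNgt; apply/negP => r_lt.
suff w0 : w = @vzero R I by move: r_lt; rewrite w0 (nrm_const i0 (lexx 0)) psi0 ltNge r0.
apply: NJI_eq0 => // i.
have wi : w i = Num.max r (T w i) by rewrite -{1}Fw.
have := lt_le_trans r_lt (coer w (ex_intro2 _ _ r r0 wFix) i).
by rewrite wi lt_max ltxx /= => /ltW r_le; rewrite ge_max r_le lexx.
Qed.

Lemma cofinal_NJI_coercive_MBI : cofinal (Psi T) -> NJI T -> coercive (Aset T) -> MBI T.
Proof.
move=> cof NJ [psi psiK coer]; have [phi phiK phi_psi] := Kinf_inverse psiK.
exists phi => // s b sL bL s_le.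
have r0 := nrm_ge0 i0 bL.
have s_le' : vle s (plusop T (vconst (nrm b)) s).
  by apply: vle_trans s_le _; apply: vmax_mono (vle_const_nrm bL) (vle_refl _).
have [w wFix sw] := cofinal_plusop_fix cof r0 sL s_le'.
have wL : linf_pos w by case: wFix.
have psi_w := coercive_plusop_fix_bound NJ psiK coer r0 wFix.
apply: le_trans (le_nrm i0 sL wL sw) _.
rewrite -(phi_psi _ (nrm_ge0 i0 wL)) Kinf_ler //; exact: Kinf_ge0 (nrm_ge0 i0 wL).
Qed.

End Equivalences.

Section EquicontinuousFamily.
Variables (R : realType) (K : Type) (P : set K) (f : K -> R -> R).
Hypothesis f0 : forall k, P k -> f k 0 = 0.
Hypothesis f_le : forall k x y, P k -> 0 <= x -> x <= y -> f k x <= f k y.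
Hypothesis f_equicont : forall r e : R, 0 <= r -> 0 < e -> exists2 d : R, 0 < d &
  forall k r', P k -> 0 <= r' -> `|r' - r| <= d -> `|f k r' - f k r| <= e.

Let bounded_at c := exists M, forall k, P k -> f k c <= M.

Lemma equicontinuous_bounded_beyond C : exists2 c, C <= c & 0 <= c /\ bounded_at c.
Proof.
(* Real induction: equicontinuity at [sup S] carries a bound from just below [sup S]
   to [sup S + d]. *)
apply: contrapT => noc; pose S := [set c | 0 <= c /\ bounded_at c].
have S0 : S 0 by split => //; exists 0 => k Pk; rewrite f0.
have ubS : ubound S C.
  by move=> c Sc; rewrite leNgt; apply/negP => Cc; apply: noc; exists c => //; exact: ltW.
have hsS : has_sup S by split; [exists 0 | exists C].
have c0 : 0 <= sup S by exact: sup_upper_bound.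
have [d d0 fd] := f_equicont c0 ltr01.
have [c1 Sc1 c1_gt] := sup_adherent d0 hsS; have [c10 [M1 fM1]] := Sc1.
have c1_le : c1 <= sup S by exact: sup_upper_bound.
have Scd : S (sup S + d).
  split; first by rewrite addr_ge0 // ltW.
  exists (M1 + 2) => k Pk.
  have := fd k (sup S + d) Pk (addr_ge0 c0 (ltW d0)).
  rewrite addrAC subrr add0r ger0_norm ?(ltW d0) // => /(_ (lexx _)).
  have c1_near : `|c1 - sup S| <= d by rewrite ler0_norm ?subr_le0 //; lra.
  have := fd k c1 Pk c10 c1_near; have := fM1 k Pk.
  by rewrite !ler_norml => ? /andP[? _] /andP[_ ?]; lra.
by have := sup_upper_bound hsS Scd; rewrite gerDl leNgt d0.
Qed.

Lemma equicontinuous_locally_bounded C :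
  exists M, forall k x, P k -> 0 <= x -> x <= C -> f k x <= M.
Proof.
have [c Cc [c0 [M fM]]] := equicontinuous_bounded_beyond C.
by exists M => k x Pk x0 xC; apply: le_trans (fM k Pk); apply: f_le (le_trans xC Cc).
Qed.

End EquicontinuousFamily.

Lemma near_forall_finite (I : choiceType) T (F : set_system T) (J : set I)
    (P : I -> T -> Prop) : Filter F -> finite_set J ->
  (forall j, J j -> \forall x \near F, P j x) -> \forall x \near F, forall j, J j -> P j x.
Proof.
move=> FF /finite_fsetP[D ->] PJ.
by apply: filterS (filter_bigI (f := P) FF PJ) => x Px j Dj; exact: Px.
Qed.

Lemma fine_dist_le (R : realType) (x y : \bar R) (e : R) :
  x \is a fin_num -> y \is a fin_num -> (`|x - y| <= e%:E)%E -> `|fine x - fine y| <= e.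
Proof. by move=> /fineK <- /fineK <-; rewrite -EFinB abse_EFin lee_fin. Qed.

Section GainOperator.
Variables (R : realType) (I : countType) (i0 : I).
Variables (Ii : I -> set I) (gam : I -> I -> R -> R) (mu : I -> (I -> R) -> \bar R).
Hypothesis go : gain_operator Ii gam mu.
Implicit Types (s t w : I -> R).

Let Ii_finite i : finite_set (Ii i).
Proof. by case: go => /(_ i)[]. Qed.
Let gam_Kinf i j : Ii i j -> Kinf (gam i j).
Proof. by case: go => _ [+ _]; apply. Qed.
Let mu_ge0 i s : linf_pos s -> (0 <= mu i s)%E.
Proof. by case: go => _ [_ [_ [+ _]]]; apply. Qed.
Let mu0 i : mu i (@vzero R I) = 0%E.
Proof. by case: go => _ [_ [_ [_ [[? _ /(_ i)[]]]]]]. Qed.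
Let gam_equicont r e : 0 <= r -> 0 < e -> exists2 d : R, 0 < d &
  forall i j r', Ii i j -> 0 <= r' -> `|r' - r| <= d -> `|gam i j r' - gam i j r| <= e.
Proof. by case: go => _ [_ [+ _]]; apply. Qed.
Let mu_mono i s t : linf_pos s -> linf_pos t -> vle s t -> (mu i s <= mu i t)%E.
Proof. by case: go => _ [_ [_ [_ [_ [+ _]]]]]; apply. Qed.
Let mu_local i (J : set I) s : finite_set J -> linf_pos s -> (forall j, ~ J j -> s j = 0) ->
  (mu i s < +oo)%E /\
  (forall e : R, 0 < e -> exists2 d : R, 0 < d &
     forall t, linf_pos t -> (forall j, ~ J j -> t j = 0) ->
       nrm (fun j => t j - s j) <= d -> (`|mu i t - mu i s| <= e%:E)%E).
Proof. by move=> fJ sL s0; case: go => _ [_ [_ [_ [_ [_ [+ _]]]]]]; apply. Qed.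
Let mu_uniform (A : set (I -> R)) (e : R) : A `<=` @linf_pos R I ->
  (exists C : R, forall s, A s -> nrm s <= C) -> 0 < e ->
  exists2 d : R, 0 < d & forall s0 s, A s0 -> linf_pos s -> nrm (fun j => s j - s0 j) <= d ->
    forall i, (`|mu i (restr (Ii i) s) - mu i (restr (Ii i) s0)| <= e%:E)%E.
Proof. by case: go => _ [_ [_ [_ [_ [_ [_ +]]]]]]; apply. Qed.

Definition gain_input i s : I -> R := fun j => if j \in Ii i then gam i j (s j) else 0.

Lemma gain_input_out i s j : ~ Ii i j -> gain_input i s j = 0.
Proof. by move=> ij; rewrite /gain_input memNset. Qed.

Lemma restr_gain_input i s : restr (Ii i) (gain_input i s) = gain_input i s.
Proof. by apply/funext => j; rewrite /restr /gain_input; case: (j \in Ii i). Qed.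

Lemma gain_input_ge0 i s j : linf_pos s -> 0 <= gain_input i s j.
Proof.
move=> [s0 _]; rewrite /gain_input; case: ifP => // /set_mem ij.
exact: Kinf_ge0 (gam_Kinf ij) (s0 j).
Qed.

Lemma gain_input_bounded s : linf_pos s ->
  exists2 M, 0 <= M & forall i j, gain_input i s j <= M.
Proof.
move=> sL; have [|||M gM] := @equicontinuous_locally_bounded R (I * I)
  (fun p => Ii p.1 p.2) (fun p => gam p.1 p.2) _ _ _ (nrm s).
- by move=> [i j] /gam_Kinf[].
- by move=> [i j] x y /gam_Kinf gK x0 xy; rewrite Kinf_ler // (le_trans x0).
- move=> r e r0 e0; have [d d0 gd] := gam_equicont r0 e0.
  by exists d => // [[i j]] r'; exact: gd.
exists (Num.max M 0) => [|i j]; first by rewrite le_max lexx orbT.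
rewrite /gain_input le_max; case: ifP => [/set_mem ij|_]; last by rewrite lexx orbT.
by rewrite (gM (i, j)) // ?linf_le //; case: sL.
Qed.

Lemma gain_input_linf i s : linf_pos s -> linf_pos (gain_input i s).
Proof.
move=> sL; have [M _ gM] := gain_input_bounded sL.
by split=> [j|]; [exact: gain_input_ge0 | exists M].
Qed.

Lemma mu_fin_num i w : linf_pos w -> (forall j, ~ Ii i j -> w j = 0) ->
  mu i w \is a fin_num.
Proof.
move=> wL w0; rewrite ge0_fin_numE ?mu_ge0 //.
by have [] := mu_local i (Ii_finite i) wL w0.
Qed.

Lemma mu_restr_fin_num i w : linf_pos w -> mu i (restr (Ii i) w) \is a fin_num.
Proof.
move=> wL; apply: mu_fin_num; first exact: linf_restr.
by move=> j ij; rewrite /restr memNset.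
Qed.

Lemma mu_restr_bounded C : 0 <= C -> exists L, forall i w, linf_pos w -> nrm w <= C ->
  fine (mu i (restr (Ii i) w)) <= L.
Proof.
move=> C0; pose A := [set w : I -> R | linf_pos w /\ nrm w <= C].
have [||d d0 dA] := mu_uniform (A := A) (e := 1) _ _ ltr01.
- by move=> w [].
- by exists C => w [].
(* Lowering the cap on [w] from [(k + 1) d] to [k d] moves it by at most [d], hence
   changes [mu] by at most [1]. *)
have mu_le_level k i w : linf_pos w -> nrm w <= C -> (forall j, w j <= k%:R * d) ->
    fine (mu i (restr (Ii i) w)) <= k%:R.
  elim: k i w => [|k IHk] i w wL wC wk.
    have -> : restr (Ii i) w = @vzero R I.
      apply/funext => j; rewrite /restr /vzero; case: ifP => // _.
      have wj0 : w j <= 0 by have := wk j; rewrite [X in _ <= X]mul0r.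
      by apply/le_anti; rewrite wj0 /=; case: wL.
    by rewrite mu0.
  have [w0 _] := wL; have kd0 : 0 <= k%:R * d by rewrite mulr_ge0 // ltW.
  pose w' := fun j => Num.min (w j) (k%:R * d).
  have w'L : linf_pos w'.
    by split=> [j|]; [rewrite le_min w0 | exists (k%:R * d) => j; rewrite ge_min lexx orbT].
  have w'C : nrm w' <= C.
    by apply: le_trans wC; apply: (le_nrm i0) w'L wL _ => j; rewrite ge_min lexx.
  have w'k : fine (mu i (restr (Ii i) w')) <= k%:R.
    by apply: IHk => // j; rewrite ge_min lexx orbT.
  have ww' : nrm (fun j => w j - w' j) <= d.
    apply: (nrm_le i0) => j; have := wk j; rewrite /w' -natr1 mulrDl mul1r => wj.
    have m2 : w j - d <= Num.min (w j) (k%:R * d) by rewrite le_min; apply/andP; split; lra.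
    by rewrite /= ger0_norm ?subr_ge0 ?ge_min ?lexx // lerBlDr -lerBlDl.
  have := dA w' w (conj w'L w'C) wL ww' i.
  move/fine_dist_le => /(_ (mu_restr_fin_num i wL) (mu_restr_fin_num i w'L)) /ler_normlW.
  by rewrite -natr1; lra.
exists (Num.trunc (C / d)).+1%:R => i w wL wC; apply: mu_le_level => // j.
apply: le_trans (linf_le j wL) _; apply: le_trans wC _.
by rewrite -ler_pdivrMr //; exact: ltW (truncnS_gt _).
Qed.

Lemma mu_gain_input_fin_num i s : linf_pos s -> mu i (gain_input i s) \is a fin_num.
Proof.
move=> sL; apply: mu_fin_num; first exact: gain_input_linf.
by move=> j; exact: gain_input_out.
Qed.

Lemma Gam_linf s : linf_pos s -> linf_pos (Gam Ii gam mu s).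
Proof.
move=> sL; have [M M0 gM] := gain_input_bounded sL.
have [L muL] := mu_restr_bounded M0.
split=> [i|]; first exact/fine_ge0/mu_ge0/gain_input_linf.
exists L => i; have -> : Gam Ii gam mu s i = fine (mu i (restr (Ii i) (gain_input i s))).
  by rewrite restr_gain_input.
by apply: muL; [exact: gain_input_linf | exact: (linf_pos_nrm_le i0 (gain_input_linf i sL))].
Qed.

Lemma Gam_mono s t : linf_pos s -> linf_pos t -> vle s t ->
  vle (Gam Ii gam mu s) (Gam Ii gam mu t).
Proof.
move=> sL tL st i; apply: fine_le; rewrite ?mu_gain_input_fin_num //.
apply: mu_mono; [exact: gain_input_linf | exact: gain_input_linf | move=> j].
rewrite /gain_input; case: ifP => // /set_mem ij.
by rewrite (Kinf_ler (gam_Kinf ij)) ?st //; [case: sL | case: tL].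
Qed.

Lemma Gam_cvg (u : nat -> I -> R) t : (forall n, linf_pos (u n)) -> linf_pos t ->
  (forall j, (fun n => u n j) @ \oo --> t j) ->
  forall i, (fun n => Gam Ii gam mu (u n) i) @ \oo --> Gam Ii gam mu t i.
Proof.
move=> uL tL ut i; apply/cvgrPdist_le => e e0.
have [_ /(_ e e0)[d d0 mud]] :=
  mu_local i (Ii_finite i) (gain_input_linf i tL) (@gain_input_out i t).
have near_gam : \forall n \near \oo, forall j, Ii i j ->
    `|gam i j (u n j) - gam i j (t j)| <= d.
  apply: near_forall_finite (Ii_finite i) _ => j ij.
  have [d' d'0 gd'] := gam_equicont (proj1 tL j) d0.
  near=> n; apply: gd' => //; first by case: (uL n).
  by rewrite distrC; near: n; apply: cvgr_dist_le; [exact: ut | exact: d'0].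
near=> n.
have gam_n : forall j, Ii i j -> `|gam i j (u n j) - gam i j (t j)| <= d.
  by near: n; exact: near_gam.
have dist_in : nrm (fun j => gain_input i (u n) j - gain_input i t j) <= d.
  apply: (nrm_le i0) => j; rewrite /gain_input; case: ifP => [/set_mem ij|_].
    exact: gam_n.
  by rewrite subrr normr0 ltW.
rewrite distrC; apply: fine_dist_le; rewrite ?mu_gain_input_fin_num //.
exact: mud (gain_input_linf i (uL n)) (@gain_input_out i (u n)) dist_in.
Unshelve. all: by end_near.
Qed.

Lemma Gam_monotone_continuous : monotone_continuous (Gam Ii gam mu).
Proof. by split; [exact: Gam_linf | exact: Gam_mono | exact: Gam_cvg]. Qed.

End GainOperator.

Unset Implicit Arguments.

Theorem proposition3p4 (R : realType) (I : countType) (i0 : I)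
  (Ii : I -> set I) (gam : I -> I -> R -> R) (mu : I -> (I -> R) -> \bar R) :
  gain_operator Ii gam mu ->
  (MBI (Gam Ii gam mu) <->
     [/\ UGS (hatop (Gam Ii gam mu)), GATTs (Gam Ii gam mu)
       & coercive (Aset (Gam Ii gam mu))]) /\
  (MBI (Gam Ii gam mu) <->
     [/\ UGS (hatop (Gam Ii gam mu)), NJI (Gam Ii gam mu)
       & coercive (Aset (Gam Ii gam mu))]) /\
  (MBI (Gam Ii gam mu) <->
     [/\ cofinal (Psi (Gam Ii gam mu)), NJI (Gam Ii gam mu)
       & coercive (Aset (Gam Ii gam mu))]).
Proof.
move=> go; have GC := Gam_monotone_continuous i0 go.
have UGS_of_MBI := MBI_UGS GC.
have cofinal_of_UGS := UGS_cofinal GC.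
have NJI_of_MBI := @MBI_NJI R I i0 (Gam Ii gam mu).
have GATT_of_cofinal := cofinal_NJI_GATT i0 GC.
have NJI_of_GATT := GATT_NJI GC.
have coercive_of_MBI := @MBI_coercive R I i0 (Gam Ii gam mu).
have MBI_of_cofinal := cofinal_NJI_coercive_MBI i0 GC.
split; [|split]; split.
- move=> mbi; split; [exact: UGS_of_MBI | | exact: coercive_of_MBI].
  exact: GATT_of_cofinal (cofinal_of_UGS (UGS_of_MBI mbi)) (NJI_of_MBI mbi).
- by case=> /cofinal_of_UGS cof /NJI_of_GATT nji; exact: MBI_of_cofinal.
- by move=> mbi; split; [exact: UGS_of_MBI | exact: NJI_of_MBI | exact: coercive_of_MBI].
- by case=> /cofinal_of_UGS; exact: MBI_of_cofinal.
- move=> mbi; split; [exact: cofinal_of_UGS (UGS_of_MBI mbi) | exact: NJI_of_MBI | ].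
  exact: coercive_of_MBI.
- by case; exact: MBI_of_cofinal.
Qed.
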